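(* Every standard finitary set functor $H\colon\mathbf{Set}\to\mathbf{Set}$ has a reduced presentation.
   Context: A set functor $H$ is finitary if for every set $X$, $HX=\bigcup HY$ over finite subsets $Y\subseteq X$ (identifying $HY$ with its image). $H$ is standard if it preserves inclusions ($X\subseteq Y$ implies $HX\subseteq HY$ with $H$ of the inclusion map being the inclusion map) and preserves finite intersections. For a finitary signature $\Sigma=(\Sigma_n)_{n<\omega}$ the polynomial functor is $H_\Sigma X=\coprod_{n<\omega}\Sigma_n\times X^n$; its elements are written $\sigma(x_1,\dots,x_n)$. A presentation of $H$ is a finitary signature $\Sigma$ with a natural transformation $\varepsilon\colon H_\Sigma\to H$ all of whose components are surjective. An $\varepsilon$-equation is an expression $\sigma(x_1,\dots,x_n)=\tau(z_1,\dots,z_m)$ with $\sigma\in\Sigma_n$, $\tau\in\Sigma_m$ and variables $x_i,z_j$ (not necessarily distinct) such that $\varepsilon_X$ maps both sides to the same element, where $X=\{x_1,\dots,x_n,z_1,\dots,z_m\}$. A presentation is reduced if for every $\varepsilon$-equation $\sigma(x_1,\dots,x_n)=\tau(z_1,\dots,z_m)$: (1) if $x_1,\dots,x_n$ are pairwise distinct, then each $x_i$ lies in $\{z_1,\dots,z_m\}$; and (2) if moreover $z_1,\dots,z_m$ are also pairwise distinct, then $\sigma=\tau$. *)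

From Stdlib Require Import List.
Set Implicit Arguments.
Unset Strict Implicit.

(* Sets are modelled by types; a set functor is a functor Type -> Type. *)
Record SetFunctor := {
  Fobj :> Type -> Type;
  Fmap : forall (X Y : Type), (X -> Y) -> Fobj X -> Fobj Y;
  Fmap_id : forall (X : Type) (a : Fobj X), Fmap (fun x : X => x) a = a;
  Fmap_comp : forall (X Y Z : Type) (f : X -> Y) (g : Y -> Z) (a : Fobj X),
      Fmap (fun x => g (f x)) a = Fmap g (Fmap f a)
}.

Definition incl_map (H : SetFunctor) (X : Type) (P : X -> Prop)
  : H {x : X | P x} -> H X := @Fmap H _ _ (@proj1_sig X P).

Definition in_sub (H : SetFunctor) (X : Type) (P : X -> Prop) (a : H X) : Prop :=
  exists b : H {x : X | P x}, @incl_map H X P b = a.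

Definition finitary (H : SetFunctor) : Prop :=
  forall (X : Type) (a : H X), exists l : list X, @in_sub H X (fun x => In x l) a.

(* Standard: preserves inclusions (H maps inclusions to injective maps,
   identified with inclusions) and preserves finite intersections. *)
Definition standard (H : SetFunctor) : Prop :=
  (forall (X : Type) (P : X -> Prop) (b1 b2 : H {x : X | P x}),
      @incl_map H X P b1 = @incl_map H X P b2 -> b1 = b2) /\
  (forall (X : Type) (P Q : X -> Prop) (a : H X),
      @in_sub H X P a -> @in_sub H X Q a -> @in_sub H X (fun x => P x /\ Q x) a).

(* Finitary signatures and polynomial functors H_Sigma X = coprod_n Sigma_n x X^n. *)
Definition Signature := nat -> Type.

Definition PolyObj (S : Signature) (X : Type) : Type :=
  { n : nat & (S n * (forall i : nat, i < n -> X))%type }.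

Definition PolyMap (S : Signature) (X Y : Type) (f : X -> Y) (t : PolyObj S X)
  : PolyObj S Y :=
  match t with
  | existT _ n (s, xs) => existT _ n (s, fun i (hi : i < n) => f (xs i hi))
  end.

Definition op (S : Signature) (X : Type) (n : nat) (s : S n)
  (xs : forall i : nat, i < n -> X) : PolyObj S X := existT _ n (s, xs).

Definition presentation (H : SetFunctor) (S : Signature)
  (eps : forall X : Type, PolyObj S X -> H X) : Prop :=
  (forall (X Y : Type) (f : X -> Y) (t : PolyObj S X),
      eps Y (PolyMap f t) = @Fmap H _ _ f (eps X t)) /\
  (forall (X : Type) (a : H X), exists t : PolyObj S X, eps X t = a).

Definition injective_vars (X : Type) (n : nat) (xs : forall i : nat, i < n -> X) : Prop :=
  forall i j (hi : i < n) (hj : j < n), xs i hi = xs j hj -> i = j.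

(* eps-equation sigma(x_1..x_n) = tau(z_1..z_m): X is exactly the set of
   variables occurring, and eps_X identifies both sides. *)
Definition eps_equation (H : SetFunctor) (S : Signature)
  (eps : forall X : Type, PolyObj S X -> H X)
  (X : Type) (n m : nat) (s : S n) (t : S m)
  (xs : forall i : nat, i < n -> X) (zs : forall j : nat, j < m -> X) : Prop :=
  (forall x : X, (exists i (hi : i < n), xs i hi = x) \/ (exists j (hj : j < m), zs j hj = x)) /\
  eps X (@op S X n s xs) = eps X (@op S X m t zs).

Definition reduced (H : SetFunctor) (S : Signature)
  (eps : forall X : Type, PolyObj S X -> H X) : Prop :=
  forall (X : Type) (n m : nat) (s : S n) (t : S m)
    (xs : forall i : nat, i < n -> X) (zs : forall j : nat, j < m -> X),
    @eps_equation H S eps X n m s t xs zs ->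
    @injective_vars X n xs ->
    (forall i (hi : i < n), exists j (hj : j < m), xs i hi = zs j hj) /\
    (@injective_vars X m zs -> existT S n s = existT S m t).

From Pilot Require Import Defs.
From Stdlib Require Import List Arith Lia Wf_nat FinFun Classical ClassicalEpsilon
  FunctionalExtensionality PropExtensionality ProofIrrelevance.
Set Implicit Arguments.
Unset Strict Implicit.
Import ListNotations.

(* Take as n-ary operation symbols the elements of H n that are full, i.e. lie in
   no H P for a proper subset P of n, one representative per orbit under the
   permutations of n; an operation symbol sigma applied to variables x is sent to
   H x (sigma).  Since H is finitary, every element of H X is an image H x (c) with
   c in some H n, and taking n least forces c to be full; hence the presentation is
   surjective.  Since H preserves intersections, if H x (sigma) = H z (tau) with x
   injective and sigma full, then sigma lies in H of the preimage of the variables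
   of tau, which must be all of n: every x_i occurs among the z_j.  When z is
   injective too, x and z are injections with the same image, so sigma and tau lie
   in the same permutation orbit and, being representatives, are equal. *)

Definition fin (n : nat) : Type := {i : nat | i < n}.

Lemma fin_eq n (p q : fin n) : proj1_sig p = proj1_sig q -> p = q.
Proof.
  destruct p as [i hi], q as [j hj]; simpl; intros ->.
  f_equal; apply proof_irrelevance.
Qed.

Definition fin_eq_dec n (p q : fin n) : {p = q} + {p <> q}.
Proof.
  destruct (Nat.eq_dec (proj1_sig p) (proj1_sig q)) as [e|e].
  - left; exact (fin_eq e).
  - right; intros ->; exact (e eq_refl).
Defined.

Lemma fin_listing_seq n : exists l : list (fin n), map (@proj1_sig _ _) l = seq 0 n.
Proof.
  induction n as [|n [l Hl]].
  - now exists nil.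
  - exists (map (fun p : fin n => exist (fun i => i < S n) (proj1_sig p)
                            (Nat.lt_lt_succ_r _ _ (proj2_sig p))) l
            ++ [exist _ n (Nat.lt_succ_diag_r n)]).
    rewrite map_app, map_map, seq_S; simpl; rewrite <- Hl; reflexivity.
Qed.

Lemma fin_listing n : exists l : list (fin n), length l = n /\ Listing l.
Proof.
  destruct (fin_listing_seq n) as [l Hl].
  exists l; repeat split.
  - apply (f_equal (@length nat)) in Hl.
    now rewrite length_map, length_seq in Hl.
  - apply (NoDup_map_inv (@proj1_sig _ _)); rewrite Hl; apply seq_NoDup.
  - intros [i hi].
    assert (Hi : In i (map (@proj1_sig _ _) l)) by (rewrite Hl; apply in_seq; lia).
    apply in_map_iff in Hi as [q [Hq Hql]].
    now rewrite <- (@fin_eq n q (exist _ i hi) Hq).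
Qed.

Lemma fin_injective_le n m (f : fin n -> fin m) : Injective f -> n <= m.
Proof.
  intros Hf.
  destruct (fin_listing n) as [l [Hl [Hnd _]]], (fin_listing m) as [l' [Hl' [_ Hfull]]].
  rewrite <- Hl, <- Hl', <- (length_map f l).
  apply NoDup_incl_length; [now apply Injective_map_NoDup | intros y _; apply Hfull].
Qed.

Lemma fin_bijective_eq n m (f : fin n -> fin m) : Bijective f -> n = m.
Proof.
  intros [g [Hgf Hfg]]; apply Nat.le_antisymm.
  - apply (fin_injective_le (f := f)); intros p q E.
    now rewrite <- (Hgf p), E, Hgf.
  - apply (fin_injective_le (f := g)); intros p q E.
    now rewrite <- (Hfg p), E, Hfg.
Qed.

Lemma fin_surjection_onto_listed X (l : list X) (P : X -> Prop) :
  (forall x, P x -> In x l) ->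
  exists k, k <= length l /\ exists s : fin k -> {x : X | P x}, Surjective s.
Proof.
  intros Hl.
  destruct (classic (exists x, P x)) as [[x0 Hx0]|Hempty].
  - exists (length l); split; [lia|].
    exists (fun p => let x := nth (proj1_sig p) l x0 in
             match excluded_middle_informative (P x) with
             | left h => exist P x h
             | right _ => exist P x0 Hx0
             end).
    intros [x hx].
    destruct (In_nth l x x0 (Hl x hx)) as [i [hi Hi]].
    exists (exist _ i hi); simpl.
    destruct excluded_middle_informative as [h|h].
    + subst x; f_equal; apply proof_irrelevance.
    + exfalso; apply h; now rewrite Hi.
  - exists 0; split; [lia|].
    exists (fun p => False_rect _ (Nat.nlt_0_r _ (proj2_sig p))).
    intros [x hx]; exfalso; eauto.
Qed.

Lemma injective_left_inverse A B (f : A -> B) :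
  Injective f -> A -> exists g : B -> A, forall a, g (f a) = a.
Proof.
  intros Hf a0.
  exists (fun b => epsilon (inhabits a0) (fun a => f a = b)).
  intros a; apply Hf.
  apply (epsilon_spec (inhabits a0) (fun a' => f a' = f a)); eauto.
Qed.

Lemma injective_same_image_bijection A B C (x : A -> C) (z : B -> C) :
  Injective x -> Injective z ->
  (forall b, exists a, x a = z b) -> (forall a, exists b, z b = x a) ->
  exists f : B -> A, Bijective f /\ forall b, x (f b) = z b.
Proof.
  intros Hx Hz Hzx Hxz.
  destruct (choice _ Hzx) as [f Hf], (choice _ Hxz) as [g Hg].
  exists f; split; [exists g; split|exact Hf].
  - intros b; apply Hz; now rewrite Hg, Hf.
  - intros a; apply Hx; now rewrite Hf, Hg.
Qed.

Section SetFunctorFacts.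

Variable H : SetFunctor.

Lemma Fmap_ext X Y (f g : X -> Y) (a : H X) :
  (forall x, f x = g x) -> Fmap f a = Fmap g a.
Proof. intros E; apply functional_extensionality in E; now subst. Qed.

Lemma Fmap_retraction X Y (f : X -> Y) (g : Y -> X) (a : H X) :
  (forall x, g (f x) = x) -> Fmap g (Fmap f a) = a.
Proof.
  intros Hgf; rewrite <- Fmap_comp, (@Fmap_ext _ _ _ (fun x => x) a Hgf).
  apply Fmap_id.
Qed.

Lemma Fmap_surjective X Y (s : X -> Y) : Surjective s -> Surjective (@Fmap H X Y s).
Proof.
  intros Hs; destruct (choice _ Hs) as [r Hr].
  intros a; exists (Fmap r a); now apply Fmap_retraction.
Qed.

Lemma in_sub_image X Y (f : X -> Y) (a : H X) :
  in_sub (fun y => exists x, f x = y) (Fmap f a).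
Proof.
  exists (Fmap (fun x => exist (fun y => exists x, f x = y) (f x) (ex_intro _ x eq_refl)) a).
  unfold Defs.incl_map; now rewrite <- Fmap_comp.
Qed.

Definition expressible X (a : H X) (n : nat) : Prop :=
  exists (c : H (fin n)) (x : fin n -> X), Fmap x c = a.

Lemma expressible_of_in_sub_listed X (l : list X) (P : X -> Prop) (a : H X) :
  in_sub P a -> (forall x, P x -> In x l) -> exists k, k <= length l /\ expressible a k.
Proof.
  intros [b Hb] Hl.
  destruct (fin_surjection_onto_listed Hl) as [k [Hk [s Hs]]].
  destruct (Fmap_surjective Hs b) as [c Hc].
  exists k; split; [exact Hk|].
  exists c, (fun p => proj1_sig (s p)).
  rewrite <- Hb; unfold Defs.incl_map; rewrite <- Hc; apply Fmap_comp.
Qed.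

Lemma least_expressible X (a : H X) :
  finitary H -> exists n, expressible a n /\ forall k, expressible a k -> n <= k.
Proof.
  intros Hfin.
  destruct (Hfin X a) as [l Hl].
  destruct (expressible_of_in_sub_listed Hl (fun x h => h)) as [k [_ Hk]].
  destruct (dec_inh_nat_subset_has_unique_least_element
              (expressible a) (fun n => classic _) (ex_intro _ k Hk))
    as [n [[Hn Hleast] _]].
  eauto.
Qed.

Definition full n (a : H (fin n)) : Prop :=
  forall P : fin n -> Prop, in_sub P a -> forall p, P p.

(* If c lay in H P with p not in P, then a would be expressible by the fewer
   variables of n minus p. *)
Lemma least_expression_full X (a : H X) n (c : H (fin n)) (x : fin n -> X) :
  Fmap x c = a -> (forall k, expressible a k -> n <= k) -> full c.
Proof.
  intros Hc Hleast P HP p.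
  apply NNPP; intros Np.
  destruct (fin_listing n) as [l [Hl [_ Hfull]]].
  set (l' := remove (@fin_eq_dec n) p l).
  assert (Hl' : length l' < n) by (rewrite <- Hl; apply remove_length_lt, Hfull).
  destruct (expressible_of_in_sub_listed (l := l') HP) as [k [Hk [c' [y Hc']]]].
  { intros q Hq; apply in_in_remove; [intros ->; contradiction | apply Hfull]. }
  enough (n <= k) by lia.
  apply Hleast; exists c', (fun q => x (y q)).
  now rewrite Fmap_comp, Hc'.
Qed.

Definition perm_related n (a b : H (fin n)) : Prop :=
  exists f : fin n -> fin n, Bijective f /\ b = Fmap f a.

Lemma perm_related_refl n (a : H (fin n)) : perm_related a a.
Proof.
  exists (fun p => p); split; [now exists (fun p => p)|].
  now rewrite Fmap_id.
Qed.

Lemma perm_related_sym n (a b : H (fin n)) : perm_related a b -> perm_related b a.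
Proof.
  intros [f [[g [Hgf Hfg]] ->]].
  exists g; split; [now exists f|].
  now rewrite Fmap_retraction.
Qed.

Lemma perm_related_trans n (a b c : H (fin n)) :
  perm_related a b -> perm_related b c -> perm_related a c.
Proof.
  intros [f [[g [Hgf Hfg]] ->]] [f' [[g' [Hgf' Hfg']] ->]].
  exists (fun p => f' (f p)); split; [|symmetry; apply Fmap_comp].
  exists (fun p => g (g' p)); split; intros p.
  - now rewrite Hgf', Hgf.
  - now rewrite Hfg, Hfg'.
Qed.

Definition canon n (a : H (fin n)) : H (fin n) := epsilon (inhabits a) (perm_related a).

Lemma canon_related n (a : H (fin n)) : perm_related a (canon a).
Proof. apply (epsilon_spec (inhabits a) (perm_related a)); exists a; apply perm_related_refl. Qed.

Lemma canon_eq n (a b : H (fin n)) : perm_related a b -> canon a = canon b.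
Proof.
  intros Hab; unfold canon.
  assert (E : perm_related a = perm_related b).
  { apply functional_extensionality; intros c; apply propositional_extensionality.
    split; intros Hc.
    - exact (perm_related_trans (perm_related_sym Hab) Hc).
    - exact (perm_related_trans Hab Hc). }
  rewrite E; f_equal; apply proof_irrelevance.
Qed.

Lemma canon_idem n (a : H (fin n)) : canon (canon a) = canon a.
Proof. symmetry; apply canon_eq, canon_related. Qed.

Hypothesis Hstd : standard H.

(* Intersect Q with the image of f (standardness), then pull back along g. *)
Lemma in_sub_retract X Y (f : X -> Y) (g : Y -> X) (Q : Y -> Prop) (a : H X) :
  (forall x, g (f x) = x) -> in_sub Q (Fmap f a) -> in_sub (fun x => Q (f x)) a.
Proof.
  intros Hgf HQ.
  destruct (proj2 Hstd _ _ _ _ HQ (in_sub_image f a)) as [c Hc].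
  assert (HQg : forall y : {y : Y | Q y /\ exists x, f x = y}, Q (f (g (proj1_sig y)))).
  { intros [y [Qy [x <-]]]; simpl; now rewrite Hgf. }
  exists (Fmap (fun y => exist (fun x => Q (f x)) (g (proj1_sig y)) (HQg y)) c).
  unfold Defs.incl_map in *; rewrite <- Fmap_comp; simpl.
  rewrite (Fmap_comp (@proj1_sig _ _) g c), Hc.
  now apply Fmap_retraction.
Qed.

(* f factors as a bijection onto its image followed by an inclusion. *)
Lemma Fmap_injective X Y (f : X -> Y) : Injective f -> Injective (@Fmap H X Y f).
Proof.
  intros Hf a b E.
  set (P := fun y => exists x, f x = y).
  set (e := fun x => exist P (f x) (ex_intro _ x eq_refl)).
  destruct (choice (fun (y : {y | P y}) x => f x = proj1_sig y) (fun y => proj2_sig y))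
    as [r Hr].
  assert (Hre : forall x, r (e x) = x) by (intros x; apply Hf, (Hr (e x))).
  rewrite <- (Fmap_retraction a Hre), <- (Fmap_retraction b Hre).
  f_equal; apply (proj1 Hstd).
  unfold Defs.incl_map; now rewrite <- !Fmap_comp.
Qed.

Lemma full_image_covered X n m (a : H (fin n)) (b : H (fin m))
  (x : fin n -> X) (z : fin m -> X) :
  full a -> Injective x -> Fmap x a = Fmap z b -> forall p, exists q, z q = x p.
Proof.
  intros Ha Hx E p.
  destruct (injective_left_inverse Hx p) as [g Hg].
  apply (Ha (fun p => exists q, z q = x p)).
  apply (in_sub_retract (Q := fun y => exists q, z q = y) Hg).
  rewrite E; apply in_sub_image.
Qed.

Lemma full_perm_related n (a b : H (fin n)) : full a -> perm_related a b -> full b.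
Proof.
  intros Ha [f [[g [Hgf Hfg]] ->]] P HP q.
  rewrite <- (Hfg q).
  exact (Ha _ (in_sub_retract Hgf HP) (g q)).
Qed.

End SetFunctorFacts.

Definition canon_sig (H : SetFunctor) : Signature :=
  fun n => {a : H (fin n) | full a /\ canon a = a}.

Definition vars X n (xs : forall i, i < n -> X) : fin n -> X :=
  fun p => xs (proj1_sig p) (proj2_sig p).

Definition canon_eps (H : SetFunctor) X (t : PolyObj (canon_sig H) X) : H X :=
  match t with existT _ n (s, xs) => Fmap (vars xs) (proj1_sig s) end.

Lemma injective_vars_Injective X n (xs : forall i, i < n -> X) :
  injective_vars xs -> Injective (vars xs).
Proof. intros Hxs [i hi] [j hj] E; apply fin_eq, (Hxs i j hi hj E). Qed.

Lemma canon_eps_natural (H : SetFunctor) X Y (f : X -> Y) (t : PolyObj (canon_sig H) X) :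
  canon_eps (PolyMap f t) = Fmap f (canon_eps t).
Proof. destruct t as [n [s xs]]; simpl; now rewrite <- Fmap_comp. Qed.

Lemma canon_eps_surjective (H : SetFunctor) X :
  finitary H -> standard H -> Surjective (@canon_eps H X).
Proof.
  intros Hfin Hstd a.
  destruct (least_expressible a Hfin) as [n [[c [x Hc]] Hleast]].
  pose proof (least_expression_full Hc Hleast) as Hc_full.
  destruct (canon_related c) as [f [[g [Hgf Hfg]] Hcanon]].
  assert (Hs : full (canon c) /\ canon (canon c) = canon c).
  { split; [exact (full_perm_related Hstd Hc_full (canon_related c)) | apply canon_idem]. }
  exists (op (exist _ (canon c) Hs) (fun i hi => x (g (exist _ i hi)))); simpl.
  rewrite <- Hc, Hcanon, <- Fmap_comp.
  apply Fmap_ext; intros p; unfold vars.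
  destruct (f p) as [i hi] eqn:Ep; simpl.
  now rewrite <- Ep, Hgf.
Qed.

Lemma canon_eps_reduced (H : SetFunctor) : standard H -> reduced (@canon_eps H).
Proof.
  intros Hstd X n m [a [Ha Ca]] [b [Hb Cb]] xs zs [_ E] Hxs; simpl in E.
  pose proof (injective_vars_Injective Hxs) as Hx.
  pose proof (full_image_covered Hstd Ha Hx E) as Hxz.
  split.
  { intros i hi; destruct (Hxz (exist _ i hi)) as [[j hj] Hq]; now exists j, hj. }
  intros Hzs.
  pose proof (injective_vars_Injective Hzs) as Hz.
  pose proof (full_image_covered Hstd Hb Hz (eq_sym E)) as Hzx.
  destruct (injective_same_image_bijection Hx Hz Hzx Hxz) as [f [Hf Hxf]].
  pose proof (fin_bijective_eq Hf); subst m.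
  assert (Hba : perm_related b a).
  { exists f; split; [exact Hf|].
    apply (Fmap_injective Hstd Hx).
    rewrite E, <- Fmap_comp; apply Fmap_ext; intros q; now rewrite Hxf. }
  apply canon_eq in Hba; rewrite Ca, Cb in Hba; subst b.
  do 2 f_equal; apply proof_irrelevance.
Qed.

Theorem mainTheorem8 (H : SetFunctor) :
  finitary H -> standard H ->
  exists (S : Signature) (eps : forall X : Type, PolyObj S X -> H X),
    @presentation H S eps /\ @reduced H S eps.
Proof.
  intros Hfin Hstd.
  exists (canon_sig H), (@canon_eps H).
  split; [split|].
  - apply canon_eps_natural.
  - intros X; apply canon_eps_surjective; assumption.
  - apply canon_eps_reduced; assumption.
Qed.
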